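(* For all finite multisets of formulas $\Gamma,\Delta$: $\vdash_{\mathsf{GT}^-}\Gamma\Rightarrow\Delta$ if and only if $\vdash_{\mathsf{GT}'^-}\Gamma\Rightarrow\Delta$.
   Context: Fix a countably infinite set $\mathsf{Prop}$ of propositional variables. Classical formulas are generated by $\alpha ::= p \mid \bot \mid \neg\alpha \mid \alpha\wedge\alpha \mid \alpha\vee\alpha$ with $p\in\mathsf{Prop}$. Formulas are generated by $\phi ::= \alpha \mid \phi\wedge\phi \mid \phi\vee\phi \mid \phi\mathbin{\backslash\!\!/}\phi$ where $\alpha$ is classical ($\vee$: split disjunction, $\mathbin{\backslash\!\!/}$: inquisitive disjunction). A sequent is $\Gamma\Rightarrow\Delta$ with $\Gamma,\Delta$ finite multisets of formulas; ''$\Gamma,\Delta$'' is multiset union. Deep-inference notation: for a formula $\chi$ with a designated occurrence of a subformula not in the scope of any negation, $\chi\{\eta\}$ denotes the result of replacing that occurrence by $\eta$. The cut-free calculus $\mathsf{GT}^-$ ($\alpha$ ranges over classical formulas, $\Lambda$ over multisets of classical formulas): axioms $\Gamma,p\Rightarrow p,\Delta$ and $\Gamma,\bot\Rightarrow\Delta$; (L$\neg$) from $\Gamma\Rightarrow\alpha,\Delta$ infer $\Gamma,\neg\alpha\Rightarrow\Delta$; (R$\neg$) from $\Gamma,\alpha\Rightarrow\Delta$ infer $\Gamma\Rightarrow\neg\alpha,\Delta$; (L$\wedge$) from $\Gamma,\phi,\psi\Rightarrow\Delta$ infer $\Gamma,\phi\wedge\psi\Rightarrow\Delta$; (R$\wedge$)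 from $\Gamma\Rightarrow\phi,\Lambda$ and $\Gamma\Rightarrow\psi,\Lambda$ infer $\Gamma\Rightarrow\phi\wedge\psi,\Lambda,\Delta$; (L$\vee$) from $\Gamma,\phi\Rightarrow\Lambda$ and $\Gamma,\psi\Rightarrow\Lambda$ infer $\Gamma,\phi\vee\psi\Rightarrow\Lambda,\Delta$; (R$\vee$) from $\Gamma\Rightarrow\phi,\psi,\Delta$ infer $\Gamma\Rightarrow\phi\vee\psi,\Delta$; (L$\mathbin{\backslash\!\!/}$) from $\Gamma,\chi\{\phi_L\}\Rightarrow\Delta$ and $\Gamma,\chi\{\phi_R\}\Rightarrow\Delta$ infer $\Gamma,\chi\{\phi_L\mathbin{\backslash\!\!/}\phi_R\}\Rightarrow\Delta$; (R$\mathbin{\backslash\!\!/}$) from $\Gamma\Rightarrow\chi\{\phi_i\},\Delta$ ($i\in\{L,R\}$) infer $\Gamma\Rightarrow\chi\{\phi_L\mathbin{\backslash\!\!/}\phi_R\},\Delta$. The calculus $\mathsf{GT}'^-$ has the same axioms and rules as $\mathsf{GT}^-$ except that (R$\wedge$) and (L$\vee$) are replaced by: (L$\vee'$) from $\Gamma_1,\phi\Rightarrow\Delta_1$ and $\Gamma_2,\psi\Rightarrow\Delta_2$ infer $\Gamma_1,\Gamma_2,\phi\vee\psi\Rightarrow\Delta_1,\Delta_2$; (R$\wedge'$) from $\Gamma_1\Rightarrow\phi,\Delta_1$ and $\Gamma_2\Rightarrow\psi,\Delta_2$ infer $\Gamma_1,\Gamma_2\Rightarrow\phi\wedge\psi,\Delta_1,\Delta_2$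 (all formulas and multisets arbitrary); and the structural rules (LC) from $\Gamma,\phi,\phi\Rightarrow\Delta$ infer $\Gamma,\phi\Rightarrow\Delta$ ($\phi$ arbitrary), and (RC) from $\Gamma\Rightarrow\alpha,\alpha,\Delta$ infer $\Gamma\Rightarrow\alpha,\Delta$ ($\alpha$ classical) are added. Neither calculus contains a cut rule. *)

From Stdlib Require Import List Permutation.
Import ListNotations.

Inductive form : Type :=
| Var  : nat -> form
| Bot  : form
| Neg  : form -> form
| And  : form -> form -> form
| Or   : form -> form -> form
| Idis : form -> form -> form.

Fixpoint classical (f : form) : Prop :=
  match f with
  | Var _ | Bot => True
  | Neg a => classical a
  | And a b | Or a b => classical a /\ classical b
  | Idis _ _ => False
  end.

Fixpoint wf (f : form) : Prop :=
  match f with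
  | Var _ | Bot => True
  | Neg a => classical a
  | And a b | Or a b | Idis a b => wf a /\ wf b
  end.

(* contexts chi{.} with a hole not in the scope of any negation *)
Inductive ctx : Type :=
| Hole   : ctx
| CAndL  : ctx -> form -> ctx
| CAndR  : form -> ctx -> ctx
| COrL   : ctx -> form -> ctx
| COrR   : form -> ctx -> ctx
| CIdisL : ctx -> form -> ctx
| CIdisR : form -> ctx -> ctx.

Fixpoint plug (c : ctx) (e : form) : form :=
  match c with
  | Hole => e
  | CAndL c f => And (plug c e) f
  | CAndR f c => And f (plug c e)
  | COrL c f => Or (plug c e) f
  | COrR f c => Or f (plug c e)
  | CIdisL c f => Idis (plug c e) f
  | CIdisR f c => Idis f (plug c e)
  end.

(* Multisets are represented by lists modulo permutation (rule gt_perm). *)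

Inductive GT : list form -> list form -> Prop :=
| gt_perm : forall G G' D D', Permutation G G' -> Permutation D D' ->
    GT G D -> GT G' D'
| gt_ax : forall G D p, GT (Var p :: G) (Var p :: D)
| gt_bot : forall G D, GT (Bot :: G) D
| gt_LNeg : forall G D a, classical a -> GT G (a :: D) -> GT (Neg a :: G) D
| gt_RNeg : forall G D a, classical a -> GT (a :: G) D -> GT G (Neg a :: D)
| gt_LAnd : forall G D f g, GT (f :: g :: G) D -> GT (And f g :: G) D
| gt_RAnd : forall G L D f g, Forall classical L ->
    GT G (f :: L) -> GT G (g :: L) -> GT G (And f g :: L ++ D)
| gt_LOr : forall G L D f g, Forall classical L ->
    GT (f :: G) L -> GT (g :: G) L -> GT (Or f g :: G) (L ++ D)
| gt_ROr : forall G D f g, GT G (f :: g :: D) -> GT G (Or f g :: D)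
| gt_LIdis : forall G D c f g,
    GT (plug c f :: G) D -> GT (plug c g :: G) D -> GT (plug c (Idis f g) :: G) D
| gt_RIdisL : forall G D c f g,
    GT G (plug c f :: D) -> GT G (plug c (Idis f g) :: D)
| gt_RIdisR : forall G D c f g,
    GT G (plug c g :: D) -> GT G (plug c (Idis f g) :: D).

Inductive GT' : list form -> list form -> Prop :=
| gt'_perm : forall G G' D D', Permutation G G' -> Permutation D D' ->
    GT' G D -> GT' G' D'
| gt'_ax : forall G D p, GT' (Var p :: G) (Var p :: D)
| gt'_bot : forall G D, GT' (Bot :: G) D
| gt'_LNeg : forall G D a, classical a -> GT' G (a :: D) -> GT' (Neg a :: G) D
| gt'_RNeg : forall G D a, classical a -> GT' (a :: G) D -> GT' G (Neg a :: D)
| gt'_LAnd : forall G D f g, GT' (f :: g :: G) D -> GT' (And f g :: G) D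
| gt'_RAnd : forall G1 G2 D1 D2 f g,
    GT' G1 (f :: D1) -> GT' G2 (g :: D2) -> GT' (G1 ++ G2) (And f g :: D1 ++ D2)
| gt'_LOr : forall G1 G2 D1 D2 f g,
    GT' (f :: G1) D1 -> GT' (g :: G2) D2 -> GT' (Or f g :: G1 ++ G2) (D1 ++ D2)
| gt'_ROr : forall G D f g, GT' G (f :: g :: D) -> GT' G (Or f g :: D)
| gt'_LIdis : forall G D c f g,
    GT' (plug c f :: G) D -> GT' (plug c g :: G) D -> GT' (plug c (Idis f g) :: G) D
| gt'_RIdisL : forall G D c f g,
    GT' G (plug c f :: D) -> GT' G (plug c (Idis f g) :: D)
| gt'_RIdisR : forall G D c f g,
    GT' G (plug c g :: D) -> GT' G (plug c (Idis f g) :: D)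
| gt'_LC : forall G D f, GT' (f :: f :: G) D -> GT' (f :: G) D
| gt'_RC : forall G D a, classical a -> GT' G (a :: a :: D) -> GT' G (a :: D).

From Stdlib Require Import List Permutation Morphisms Classical Lia.
Import ListNotations.

(* Both directions go through the resolutions of a formula: the classical formulas
   obtained by choosing one disjunct of every inquisitive disjunction.

   GT^- derivations become GT'^- derivations because weakening and contraction are
   admissible in GT'^-, so the shared contexts of (R/\) and (L\/) can be duplicated,
   split by the context-splitting rules, and merged again.

   Conversely, call a sequent valid when every choice of resolutions of its antecedent
   classically entails some choice of resolutions of its succedent.  GT'^- is sound for
   this notion rule by rule.  GT^- is complete for it on well-formed sequents: its rules
   for the inquisitive disjunction, applied deep inside formulas, reduce a sequent to
   sequents of resolutions; these are classical, so the context restriction of (R/\)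
   and (L\/) is vacuous and the usual inversion argument applies. *)

(** * Weakening and contraction in GT'^- *)

#[local] Instance GT'_Permutation :
  Proper (@Permutation form ==> @Permutation form ==> iff) GT'.
Proof.
  intros G G' HG D D' HD; split; apply gt'_perm; auto; symmetry; assumption.
Qed.

Lemma GT'_weaken G D E F : GT' G D -> GT' (G ++ E) (D ++ F).
Proof.
  intros HGD; revert E F; induction HGD; intros E F; simpl in *.
  - eapply gt'_perm; [apply Permutation_app_tail; eassumption..|auto].
  - apply gt'_ax.
  - apply gt'_bot.
  - apply gt'_LNeg; auto.
  - apply gt'_RNeg; auto.
  - apply gt'_LAnd; auto.
  - rewrite <- !app_assoc, (Permutation_app_comm G2), (Permutation_app_comm D2), !app_assoc.
    apply gt'_RAnd; auto.
  - rewrite <- !app_assoc, (Permutation_app_comm G2), (Permutation_app_comm D2), !app_assoc.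
    apply gt'_LOr; auto.
  - apply gt'_ROr; auto.
  - apply gt'_LIdis; auto.
  - apply gt'_RIdisL; auto.
  - apply gt'_RIdisR; auto.
  - apply gt'_LC; auto.
  - apply gt'_RC; auto.
Qed.

Lemma GT'_contract_l H G D : GT' (H ++ G ++ G) D -> GT' (H ++ G) D.
Proof.
  revert H; induction G as [|a G IH]; intros H HGD; [exact HGD|].
  replace (H ++ a :: G) with ((H ++ [a]) ++ G) by (rewrite <- app_assoc; reflexivity).
  apply IH; rewrite <- app_assoc; simpl; rewrite <- Permutation_middle; apply gt'_LC.
  simpl in HGD; rewrite <- !Permutation_middle in HGD; exact HGD.
Qed.

Lemma GT'_contract_r H L G : Forall classical L ->
  GT' G (H ++ L ++ L) -> GT' G (H ++ L).
Proof.
  intros HL; revert H; induction HL as [|a L Ha HL IH]; intros H HGD; [exact HGD|].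
  replace (H ++ a :: L) with ((H ++ [a]) ++ L) by (rewrite <- app_assoc; reflexivity).
  apply IH; rewrite <- app_assoc; simpl; rewrite <- Permutation_middle; apply gt'_RC; [exact Ha|].
  simpl in HGD; rewrite <- !Permutation_middle in HGD; exact HGD.
Qed.

Lemma GT_GT' G D : GT G D -> GT' G D.
Proof.
  induction 1.
  - eapply gt'_perm; eassumption.
  - apply gt'_ax.
  - apply gt'_bot.
  - apply gt'_LNeg; assumption.
  - apply gt'_RNeg; assumption.
  - apply gt'_LAnd; assumption.
  - rewrite <- (app_nil_r G); apply (GT'_weaken G (And f g :: L)).
    apply (GT'_contract_r [And f g]); [assumption|].
    apply (GT'_contract_l []), (gt'_RAnd G G L L); assumption.
  - rewrite <- (app_nil_r (Or f g :: G)); apply (GT'_weaken (Or f g :: G) L).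
    apply (GT'_contract_r []); [assumption|].
    apply (GT'_contract_l [Or f g]), (gt'_LOr G G L L); assumption.
  - apply gt'_ROr; assumption.
  - apply gt'_LIdis; assumption.
  - apply gt'_RIdisL; assumption.
  - apply gt'_RIdisR; assumption.
Qed.

(** * Resolutions and their classical semantics *)

Definition prod_with (op : form -> form -> form) (l1 l2 : list form) : list form :=
  flat_map (fun x => map (op x) l2) l1.

Lemma in_prod_with op l1 l2 r :
  In r (prod_with op l1 l2) <-> exists x y, r = op x y /\ In x l1 /\ In y l2.
Proof.
  unfold prod_with; rewrite in_flat_map; split.
  - intros [x [Hx Hr]]; apply in_map_iff in Hr as [y [<- Hy]]; eauto.
  - intros [x [y [-> [Hx Hy]]]]; exists x; split; [assumption|]; apply in_map; assumption.
Qed.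

Lemma incl_prod_with op l1 l2 m1 m2 :
  incl l1 m1 -> incl l2 m2 -> incl (prod_with op l1 l2) (prod_with op m1 m2).
Proof.
  intros H1 H2 r Hr; apply in_prod_with in Hr as [x [y [-> [Hx Hy]]]].
  apply in_prod_with; exists x, y; auto.
Qed.

Lemma incl_prod_with_app_l op l1 l2 m n :
  incl l1 (m ++ n) -> incl (prod_with op l1 l2) (prod_with op m l2 ++ prod_with op n l2).
Proof.
  intros H r Hr; apply in_prod_with in Hr as [x [y [-> [Hx Hy]]]].
  destruct (in_app_or _ _ _ (H x Hx)); apply in_or_app; [left|right];
    apply in_prod_with; exists x, y; auto.
Qed.

Lemma incl_prod_with_app_r op l1 l2 m n :
  incl l2 (m ++ n) -> incl (prod_with op l1 l2) (prod_with op l1 m ++ prod_with op l1 n).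
Proof.
  intros H r Hr; apply in_prod_with in Hr as [x [y [-> [Hx Hy]]]].
  destruct (in_app_or _ _ _ (H y Hy)); apply in_or_app; [left|right];
    apply in_prod_with; exists x, y; auto.
Qed.

Fixpoint resolutions (x : form) : list form :=
  match x with
  | And a b => prod_with And (resolutions a) (resolutions b)
  | Or a b => prod_with Or (resolutions a) (resolutions b)
  | Idis a b => resolutions a ++ resolutions b
  | _ => [x]
  end.

Definition is_resolution (x r : form) : Prop := In r (resolutions x).

Lemma resolution_exists x : exists r, is_resolution x r.
Proof.
  unfold is_resolution.
  induction x as [p| |a _|a [ra Ha] b [rb Hb]|a [ra Ha] b [rb Hb]|a [ra Ha] b _];
    simpl; eauto.
  - exists (And ra rb); apply in_prod_with; eauto.
  - exists (Or ra rb); apply in_prod_with; eauto.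
  - exists ra; apply in_or_app; auto.
Qed.

Lemma resolutions_exist G : exists rho, Forall2 is_resolution G rho.
Proof.
  induction G as [|x G [rho Hrho]]; [eauto|].
  destruct (resolution_exists x) as [r Hr]; eauto.
Qed.

Lemma resolutions_classical a : classical a -> resolutions a = [a].
Proof.
  induction a; simpl; try tauto; intros [Ha Hb];
    rewrite IHa1, IHa2 by assumption; reflexivity.
Qed.

Lemma is_resolution_classical a r : classical a -> is_resolution a r <-> r = a.
Proof.
  intros Ha; unfold is_resolution; rewrite resolutions_classical by assumption.
  simpl; intuition.
Qed.

Lemma wf_resolution_classical x r : wf x -> is_resolution x r -> classical r.
Proof.
  unfold is_resolution; revert r.
  induction x; simpl; intros r Hx Hr.
  - destruct Hr as [<-|[]]; exact I.
  - destruct Hr as [<-|[]]; exact I.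
  - destruct Hr as [<-|[]]; exact Hx.
  - apply in_prod_with in Hr as [a [b [-> [Ha Hb]]]]; split; firstorder.
  - apply in_prod_with in Hr as [a [b [-> [Ha Hb]]]]; split; firstorder.
  - apply in_app_or in Hr as [Hr|Hr]; firstorder.
Qed.

Lemma Forall2_resolution_classical G rho :
  Forall wf G -> Forall2 is_resolution G rho -> Forall classical rho.
Proof.
  intros HG Hrho; induction Hrho; inversion_clear HG; constructor; auto.
  eapply wf_resolution_classical; eassumption.
Qed.

Lemma incl_resolutions_plug c x y :
  incl (resolutions x) (resolutions y) ->
  incl (resolutions (plug c x)) (resolutions (plug c y)).
Proof.
  intros Hxy; induction c; simpl; try (apply incl_prod_with; auto using incl_refl).
  - exact Hxy.
  - apply incl_app_app; auto using incl_refl.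
  - apply incl_app_app; auto using incl_refl.
Qed.

Lemma incl_resolutions_plug_app c x y z :
  incl (resolutions x) (resolutions y ++ resolutions z) ->
  incl (resolutions (plug c x)) (resolutions (plug c y) ++ resolutions (plug c z)).
Proof.
  intros Hx; induction c; simpl;
    try (apply incl_prod_with_app_l || apply incl_prod_with_app_r; assumption).
  - exact Hx.
  - intros r; specialize (IHc r); rewrite !in_app_iff in *; tauto.
  - intros r; specialize (IHc r); rewrite !in_app_iff in *; tauto.
Qed.

(* [Idis] is read as [Or]; this matters only for formulas that are not well formed,
   since the resolutions of well-formed formulas are classical. *)
Fixpoint eval (v : nat -> Prop) (x : form) : Prop :=
  match x with
  | Var p => v p
  | Bot => False
  | Neg a => ~ eval v a
  | And a b => eval v a /\ eval v b
  | Or a b | Idis a b => eval v a \/ eval v b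
  end.

Definition entails (G D : list form) : Prop :=
  forall v, Forall (eval v) G -> Exists (eval v) D.

#[local] Instance entails_Permutation :
  Proper (@Permutation form ==> @Permutation form ==> iff) entails.
Proof.
  intros G G' HG D D' HD; split; intros HE v Hv.
  - rewrite <- HD; apply HE; rewrite HG; exact Hv.
  - rewrite HD; apply HE; rewrite <- HG; exact Hv.
Qed.

Lemma entails_Neg_l a G D : entails (Neg a :: G) D <-> entails G (a :: D).
Proof.
  split; intros HE v Hv.
  - destruct (classic (eval v a)); [now left|right].
    apply HE; constructor; assumption.
  - inversion_clear Hv as [|? ? Ha HG].
    apply HE in HG; inversion_clear HG; [contradiction|assumption].
Qed.

Lemma entails_Neg_r a G D : entails G (Neg a :: D) <-> entails (a :: G) D.
Proof.
  split; intros HE v Hv.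
  - inversion_clear Hv as [|? ? Ha HG].
    apply HE in HG; inversion_clear HG; [contradiction|assumption].
  - destruct (classic (eval v a)); [right|now left].
    apply HE; constructor; assumption.
Qed.

Lemma entails_And_l a b G D : entails (And a b :: G) D <-> entails (a :: b :: G) D.
Proof.
  split; intros HE v Hv; apply HE; rewrite !Forall_cons_iff in *; simpl in *; tauto.
Qed.

Lemma entails_Or_r a b G D : entails G (Or a b :: D) <-> entails G (a :: b :: D).
Proof.
  split; intros HE v Hv; specialize (HE v Hv); rewrite !Exists_cons in *; simpl in *; tauto.
Qed.

Lemma entails_And_r_inv a b G D :
  entails G (And a b :: D) -> entails G (a :: D) /\ entails G (b :: D).
Proof.
  intros HE; split; intros v Hv; specialize (HE v Hv); rewrite !Exists_cons in *;
    simpl in *; tauto.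
Qed.

Lemma entails_Or_l_inv a b G D :
  entails (Or a b :: G) D -> entails (a :: G) D /\ entails (b :: G) D.
Proof.
  intros HE; split; intros v Hv; apply HE; rewrite !Forall_cons_iff in *; simpl in *; tauto.
Qed.

Lemma entails_And_r_app a b G1 G2 D1 D2 :
  entails G1 (a :: D1) -> entails G2 (b :: D2) ->
  entails (G1 ++ G2) (And a b :: D1 ++ D2).
Proof.
  intros HE1 HE2 v Hv; apply Forall_app in Hv as [Hv1 Hv2].
  specialize (HE1 v Hv1); specialize (HE2 v Hv2).
  rewrite Exists_cons, Exists_app in *; simpl; tauto.
Qed.

Lemma entails_Or_l_app a b G1 G2 D1 D2 :
  entails (a :: G1) D1 -> entails (b :: G2) D2 ->
  entails (Or a b :: G1 ++ G2) (D1 ++ D2).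
Proof.
  intros HE1 HE2 v Hv; rewrite Forall_cons_iff, Forall_app in Hv.
  destruct Hv as [[Ha|Hb] [Hv1 Hv2]]; apply Exists_app; [left|right];
    [apply HE1|apply HE2]; constructor; assumption.
Qed.

Definition valid (G D : list form) : Prop :=
  forall rho, Forall2 is_resolution G rho ->
  exists sigma, Forall2 is_resolution D sigma /\ entails rho sigma.

(** * Soundness of GT'^- *)

Lemma Forall2_cons_l_inv {A B} (P : A -> B -> Prop) x l m :
  Forall2 P (x :: l) m -> exists y m', m = y :: m' /\ P x y /\ Forall2 P l m'.
Proof. intros H; inversion H; eauto. Qed.

Lemma valid_perm G G' D D' :
  Permutation G G' -> Permutation D D' -> valid G D -> valid G' D'.
Proof.
  intros HG HD HV rho' Hrho'.
  destruct (Permutation_Forall2 (Permutation_sym HG) Hrho') as [rho [Hp Hrho]].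
  destruct (HV rho Hrho) as [sigma [Hsigma HE]].
  destruct (Permutation_Forall2 HD Hsigma) as [sigma' [Hp' Hsigma']].
  exists sigma'; split; [assumption|].
  rewrite Hp, <- Hp'; exact HE.
Qed.

Lemma valid_ax p G D : valid (Var p :: G) (Var p :: D).
Proof.
  intros rho Hrho; apply Forall2_cons_l_inv in Hrho as [r [rho' [-> [Hr _]]]].
  destruct Hr as [<-|[]].
  destruct (resolutions_exist D) as [sigma Hsigma].
  exists (Var p :: sigma); split.
  - constructor; [left; reflexivity|assumption].
  - intros v Hv; left; exact (Forall_inv Hv).
Qed.

Lemma valid_bot G D : valid (Bot :: G) D.
Proof.
  intros rho Hrho; apply Forall2_cons_l_inv in Hrho as [r [rho' [-> [Hr _]]]].
  destruct Hr as [<-|[]].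
  destruct (resolutions_exist D) as [sigma Hsigma].
  exists sigma; split; [assumption|].
  intros v Hv; destruct (Forall_inv Hv).
Qed.

Lemma valid_LNeg a G D : classical a -> valid G (a :: D) -> valid (Neg a :: G) D.
Proof.
  intros Ha HV rho Hrho; apply Forall2_cons_l_inv in Hrho as [r [rho' [-> [Hr Hrho']]]].
  destruct Hr as [<-|[]].
  destruct (HV rho' Hrho') as [sigma [Hsigma HE]].
  apply Forall2_cons_l_inv in Hsigma as [s [sigma' [-> [Hs Hsigma']]]].
  apply is_resolution_classical in Hs as ->; [|assumption].
  exists sigma'; split; [assumption|].
  apply entails_Neg_l; assumption.
Qed.

Lemma valid_RNeg a G D : classical a -> valid (a :: G) D -> valid G (Neg a :: D).
Proof.
  intros Ha HV rho Hrho.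
  destruct (HV (a :: rho)) as [sigma [Hsigma HE]].
  { constructor; [apply is_resolution_classical|]; auto. }
  exists (Neg a :: sigma); split.
  - constructor; [left; reflexivity|assumption].
  - apply entails_Neg_r; assumption.
Qed.

Lemma valid_LAnd f g G D : valid (f :: g :: G) D -> valid (And f g :: G) D.
Proof.
  intros HV rho Hrho; apply Forall2_cons_l_inv in Hrho as [r [rho' [-> [Hr Hrho']]]].
  apply in_prod_with in Hr as [rf [rg [-> [Hf Hg]]]].
  destruct (HV (rf :: rg :: rho')) as [sigma [Hsigma HE]]; [repeat constructor; assumption|].
  exists sigma; split; [assumption|].
  apply entails_And_l; assumption.
Qed.

Lemma valid_RAnd f g G1 G2 D1 D2 :
  valid G1 (f :: D1) -> valid G2 (g :: D2) -> valid (G1 ++ G2) (And f g :: D1 ++ D2).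
Proof.
  intros HV1 HV2 rho Hrho.
  apply Forall2_app_inv_l in Hrho as [rho1 [rho2 [Hrho1 [Hrho2 ->]]]].
  destruct (HV1 rho1 Hrho1) as [sigma1 [Hsigma1 HE1]].
  destruct (HV2 rho2 Hrho2) as [sigma2 [Hsigma2 HE2]].
  apply Forall2_cons_l_inv in Hsigma1 as [rf [sigma1' [-> [Hf Hsigma1']]]].
  apply Forall2_cons_l_inv in Hsigma2 as [rg [sigma2' [-> [Hg Hsigma2']]]].
  exists (And rf rg :: sigma1' ++ sigma2'); split.
  - constructor; [apply in_prod_with; eauto|apply Forall2_app; assumption].
  - apply entails_And_r_app; assumption.
Qed.

Lemma valid_LOr f g G1 G2 D1 D2 :
  valid (f :: G1) D1 -> valid (g :: G2) D2 -> valid (Or f g :: G1 ++ G2) (D1 ++ D2).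
Proof.
  intros HV1 HV2 rho Hrho; apply Forall2_cons_l_inv in Hrho as [r [rho' [-> [Hr Hrho']]]].
  apply in_prod_with in Hr as [rf [rg [-> [Hf Hg]]]].
  apply Forall2_app_inv_l in Hrho' as [rho1 [rho2 [Hrho1 [Hrho2 ->]]]].
  destruct (HV1 (rf :: rho1)) as [sigma1 [Hsigma1 HE1]]; [constructor; assumption|].
  destruct (HV2 (rg :: rho2)) as [sigma2 [Hsigma2 HE2]]; [constructor; assumption|].
  exists (sigma1 ++ sigma2); split; [apply Forall2_app; assumption|].
  apply entails_Or_l_app; assumption.
Qed.

Lemma valid_ROr f g G D : valid G (f :: g :: D) -> valid G (Or f g :: D).
Proof.
  intros HV rho Hrho; destruct (HV rho Hrho) as [sigma [Hsigma HE]].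
  apply Forall2_cons_l_inv in Hsigma as [rf [sigma1 [-> [Hf Hsigma1]]]].
  apply Forall2_cons_l_inv in Hsigma1 as [rg [sigma2 [-> [Hg Hsigma2]]]].
  exists (Or rf rg :: sigma2); split.
  - constructor; [apply in_prod_with; eauto|assumption].
  - apply entails_Or_r; assumption.
Qed.

Lemma valid_L_incl x y z G D :
  incl (resolutions x) (resolutions y ++ resolutions z) ->
  valid (y :: G) D -> valid (z :: G) D -> valid (x :: G) D.
Proof.
  intros Hx HVy HVz rho Hrho; apply Forall2_cons_l_inv in Hrho as [r [rho' [-> [Hr Hrho']]]].
  destruct (in_app_or _ _ _ (Hx r Hr)); [apply HVy|apply HVz]; constructor; assumption.
Qed.

Lemma valid_R_incl x y G D :
  incl (resolutions x) (resolutions y) -> valid G (x :: D) -> valid G (y :: D).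
Proof.
  intros Hxy HV rho Hrho; destruct (HV rho Hrho) as [sigma [Hsigma HE]].
  apply Forall2_cons_l_inv in Hsigma as [r [sigma' [-> [Hr Hsigma']]]].
  exists (r :: sigma'); split; [constructor; [apply Hxy|]|]; assumption.
Qed.

Lemma valid_LC f G D : valid (f :: f :: G) D -> valid (f :: G) D.
Proof.
  intros HV rho Hrho; apply Forall2_cons_l_inv in Hrho as [r [rho' [-> [Hr Hrho']]]].
  destruct (HV (r :: r :: rho')) as [sigma [Hsigma HE]]; [repeat constructor; assumption|].
  exists sigma; split; [assumption|].
  intros v Hv; apply HE; inversion_clear Hv; repeat constructor; assumption.
Qed.

Lemma valid_RC a G D : classical a -> valid G (a :: a :: D) -> valid G (a :: D).
Proof.
  intros Ha HV rho Hrho; destruct (HV rho Hrho) as [sigma [Hsigma HE]].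
  apply Forall2_cons_l_inv in Hsigma as [r1 [sigma1 [-> [Hr1 Hsigma1]]]].
  apply Forall2_cons_l_inv in Hsigma1 as [r2 [sigma2 [-> [Hr2 Hsigma2]]]].
  apply is_resolution_classical in Hr1 as ->; [|assumption].
  apply is_resolution_classical in Hr2 as ->; [|assumption].
  exists (a :: sigma2); split; [constructor; [apply is_resolution_classical|]; auto|].
  intros v Hv; specialize (HE v Hv); rewrite !Exists_cons in *; tauto.
Qed.

Lemma GT'_valid G D : GT' G D -> valid G D.
Proof.
  induction 1.
  - eapply valid_perm; eassumption.
  - apply valid_ax.
  - apply valid_bot.
  - apply valid_LNeg; assumption.
  - apply valid_RNeg; assumption.
  - apply valid_LAnd; assumption.
  - apply valid_RAnd; assumption.
  - apply valid_LOr; assumption.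
  - apply valid_ROr; assumption.
  - apply (valid_L_incl _ (plug c f) (plug c g)); [|assumption..].
    apply incl_resolutions_plug_app, incl_refl.
  - apply (valid_R_incl (plug c f)); [|assumption].
    apply incl_resolutions_plug, incl_appl, incl_refl.
  - apply (valid_R_incl (plug c g)); [|assumption].
    apply incl_resolutions_plug, incl_appr, incl_refl.
  - apply valid_LC; assumption.
  - apply valid_RC; assumption.
Qed.

(** * Completeness of GT^- *)

#[local] Instance GT_Permutation :
  Proper (@Permutation form ==> @Permutation form ==> iff) GT.
Proof.
  intros G G' HG D D' HD; split; apply gt_perm; auto; symmetry; assumption.
Qed.

Fixpoint ctx_comp (c d : ctx) : ctx :=
  match c with
  | Hole => d
  | CAndL c f => CAndL (ctx_comp c d) f
  | CAndR f c => CAndR f (ctx_comp c d)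
  | COrL c f => COrL (ctx_comp c d) f
  | COrR f c => COrR f (ctx_comp c d)
  | CIdisL c f => CIdisL (ctx_comp c d) f
  | CIdisR f c => CIdisR f (ctx_comp c d)
  end.

Lemma plug_ctx_comp c d e : plug (ctx_comp c d) e = plug c (plug d e).
Proof. induction c; simpl; congruence. Qed.

Lemma GT_L_resolutions x c G D :
  (forall r, is_resolution x r -> GT (plug c r :: G) D) -> GT (plug c x :: G) D.
Proof.
  revert c; induction x as [p| |a _|a IHa b IHb|a IHa b IHb|a IHa b IHb]; intros c HGD;
    try (apply HGD; left; reflexivity).
  (* Resolve [a] in the context [c{_ /\ b}], then [b] in [c{ra /\ _}]. *)
  - change (And a b) with (plug (CAndL Hole b) a); rewrite <- plug_ctx_comp.
    apply IHa; intros ra Ha; rewrite plug_ctx_comp; simpl.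
    change (And ra b) with (plug (CAndR ra Hole) b); rewrite <- plug_ctx_comp.
    apply IHb; intros rb Hb; rewrite plug_ctx_comp; simpl.
    apply HGD, in_prod_with; eauto.
  - change (Or a b) with (plug (COrL Hole b) a); rewrite <- plug_ctx_comp.
    apply IHa; intros ra Ha; rewrite plug_ctx_comp; simpl.
    change (Or ra b) with (plug (COrR ra Hole) b); rewrite <- plug_ctx_comp.
    apply IHb; intros rb Hb; rewrite plug_ctx_comp; simpl.
    apply HGD, in_prod_with; eauto.
  - apply gt_LIdis; [apply IHa|apply IHb]; intros r Hr; apply HGD, in_or_app; auto.
Qed.

Lemma GT_R_resolution x c G D r :
  is_resolution x r -> GT G (plug c r :: D) -> GT G (plug c x :: D).
Proof.
  revert c r; induction x as [p| |a _|a IHa b IHb|a IHa b IHb|a IHa b IHb]; intros c r Hr HGD;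
    try (destruct Hr as [<-|[]]; exact HGD).
  - apply in_prod_with in Hr as [ra [rb [-> [Ha Hb]]]].
    change (And a b) with (plug (CAndL Hole b) a); rewrite <- plug_ctx_comp.
    apply (IHa _ ra Ha); rewrite plug_ctx_comp; simpl.
    change (And ra b) with (plug (CAndR ra Hole) b); rewrite <- plug_ctx_comp.
    apply (IHb _ rb Hb); rewrite plug_ctx_comp; exact HGD.
  - apply in_prod_with in Hr as [ra [rb [-> [Ha Hb]]]].
    change (Or a b) with (plug (COrL Hole b) a); rewrite <- plug_ctx_comp.
    apply (IHa _ ra Ha); rewrite plug_ctx_comp; simpl.
    change (Or ra b) with (plug (COrR ra Hole) b); rewrite <- plug_ctx_comp.
    apply (IHb _ rb Hb); rewrite plug_ctx_comp; exact HGD.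
  - apply in_app_or in Hr as [Hr|Hr]; [apply gt_RIdisL|apply gt_RIdisR]; eauto.
Qed.

Lemma GT_L_resolutions_list G H D :
  (forall rho, Forall2 is_resolution G rho -> GT (rho ++ H) D) -> GT (G ++ H) D.
Proof.
  revert H; induction G as [|x G IH]; intros H HGD; [apply (HGD []); constructor|].
  apply (GT_L_resolutions x Hole); intros r Hr; simpl.
  rewrite Permutation_middle; apply IH; intros rho Hrho.
  rewrite <- Permutation_middle; apply (HGD (r :: rho)); constructor; assumption.
Qed.

Lemma GT_R_resolutions_list G D sigma H :
  Forall2 is_resolution D sigma -> GT G (sigma ++ H) -> GT G (D ++ H).
Proof.
  intros Hs; revert H; induction Hs as [|x r D sigma Hr Hs IH]; intros H HGD; [exact HGD|].
  apply (GT_R_resolution x Hole _ _ r Hr); simpl.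
  rewrite Permutation_middle; apply IH.
  rewrite <- Permutation_middle; exact HGD.
Qed.

Definition atomic (x : form) : Prop :=
  match x with Var _ | Bot => True | _ => False end.

Lemma Forall_atomic_classical A : Forall atomic A -> Forall classical A.
Proof. apply Forall_impl; intros []; simpl; tauto. Qed.

Lemma GT_atomic A B : Forall atomic A -> Forall atomic B -> entails A B -> GT A B.
Proof.
  intros HA HB HE.
  destruct (classic (In Bot A)) as [HBot|HBot].
  - apply in_split in HBot as [A1 [A2 ->]].
    rewrite <- Permutation_middle; apply gt_bot.
  - assert (HvA : Forall (eval (fun p => In (Var p) A)) A).
    { rewrite Forall_forall in *; intros x Hx.
      specialize (HA x Hx); destruct x; simpl in *; tauto. }
    apply HE, Exists_exists in HvA as [y [Hy Ey]].
    rewrite Forall_forall in HB; specialize (HB y Hy).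
    destruct y; simpl in *; try tauto.
    apply in_split in Ey as [A1 [A2 ->]]; apply in_split in Hy as [B1 [B2 ->]].
    rewrite <- !Permutation_middle; apply gt_ax.
Qed.

Fixpoint fsize (x : form) : nat :=
  match x with
  | Var _ | Bot => 1
  | Neg a => S (fsize a)
  | And a b | Or a b | Idis a b => S (fsize a + fsize b)
  end.

Definition weight (G : list form) : nat := list_sum (map fsize G).

Lemma GT_classical_complete_atoms n G D A B :
  weight G + weight D < n ->
  Forall classical G -> Forall classical D -> Forall atomic A -> Forall atomic B ->
  entails (G ++ A) (D ++ B) -> GT (G ++ A) (D ++ B).
Proof.
  revert G D A B; induction n as [|n IH]; intros G D A B Hn HG HD HA HB HE; [lia|].
  unfold weight in *.
  destruct G as [|x G]; [destruct D as [|y D]|].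
  - apply GT_atomic; assumption.
  - apply Forall_cons_iff in HD as [Hy HD].
    destruct y as [p| |a|a b|a b|a b]; simpl in *.
    + rewrite Permutation_middle; apply (IH [] D A (Var p :: B));
        [simpl; lia|repeat constructor; tauto..|rewrite <- Permutation_middle; exact HE].
    + rewrite Permutation_middle; apply (IH [] D A (Bot :: B));
        [simpl; lia|repeat constructor; tauto..|rewrite <- Permutation_middle; exact HE].
    + apply gt_RNeg; [assumption|]; apply (IH [a] D A B);
        [simpl; lia|repeat constructor; tauto..|apply entails_Neg_r; exact HE].
    + apply entails_And_r_inv in HE as [HEa HEb].
      rewrite <- (app_nil_r (D ++ B)).
      apply gt_RAnd; [apply Forall_app; auto using Forall_atomic_classical|..].
      * apply (IH [] (a :: D) A B); [simpl; lia|repeat constructor; tauto..|exact HEa].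
      * apply (IH [] (b :: D) A B); [simpl; lia|repeat constructor; tauto..|exact HEb].
    + apply gt_ROr, (IH [] (a :: b :: D) A B);
        [simpl; lia|repeat constructor; tauto..|apply entails_Or_r; exact HE].
    + contradiction.
  - apply Forall_cons_iff in HG as [Hx HG].
    destruct x as [p| |a|a b|a b|a b]; simpl in *.
    + rewrite Permutation_middle; apply (IH G D (Var p :: A) B);
        [simpl; lia|repeat constructor; tauto..|rewrite <- Permutation_middle; exact HE].
    + apply gt_bot.
    + apply gt_LNeg; [assumption|]; apply (IH G (a :: D) A B);
        [simpl; lia|repeat constructor; tauto..|apply entails_Neg_l; exact HE].
    + apply gt_LAnd, (IH (a :: b :: G) D A B);
        [simpl; lia|repeat constructor; tauto..|apply entails_And_l; exact HE].
    + apply entails_Or_l_inv in HE as [HEa HEb].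
      rewrite <- (app_nil_r (D ++ B)).
      apply gt_LOr; [apply Forall_app; auto using Forall_atomic_classical|..].
      * apply (IH (a :: G) D A B); [simpl; lia|repeat constructor; tauto..|exact HEa].
      * apply (IH (b :: G) D A B); [simpl; lia|repeat constructor; tauto..|exact HEb].
    + contradiction.
Qed.

Lemma GT_classical_complete G D :
  Forall classical G -> Forall classical D -> entails G D -> GT G D.
Proof.
  intros HG HD HE; rewrite <- (app_nil_r G), <- (app_nil_r D).
  apply (GT_classical_complete_atoms (S (weight G + weight D))); auto.
  rewrite !app_nil_r; exact HE.
Qed.

Lemma valid_GT G D : Forall wf G -> Forall wf D -> valid G D -> GT G D.
Proof.
  intros HG HD HV; rewrite <- (app_nil_r G).
  apply GT_L_resolutions_list; intros rho Hrho.
  destruct (HV rho Hrho) as [sigma [Hsigma HE]].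
  rewrite <- (app_nil_r D); apply (GT_R_resolutions_list _ _ sigma _ Hsigma).
  rewrite !app_nil_r; apply GT_classical_complete; [| |exact HE].
  - apply (Forall2_resolution_classical G); assumption.
  - apply (Forall2_resolution_classical D); assumption.
Qed.

Theorem proposition9p2 (G D : list form) :
  Forall wf G -> Forall wf D -> (GT G D <-> GT' G D).
Proof.
  intros HG HD; split.
  - apply GT_GT'.
  - intros HGD; apply valid_GT, GT'_valid; assumption.
Qed.
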